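(* Let $\mathcal{L}$ be a nonempty set and $\mathcal{C}: 2^{\mathcal{L}}\to 2^{\mathcal{L}}$ a C-logics. If $A\subseteq B\subseteq\mathcal{L}$ and $A$ is inconsistent, then $B$ is inconsistent.
   Context: A C-logics is a map $\mathcal{C}: 2^{\mathcal{L}}\to 2^{\mathcal{L}}$ satisfying Inclusion ($A\subseteq\mathcal{C}(A)$) and Cumulativity ($A\subseteq B\subseteq\mathcal{C}(A)\Rightarrow\mathcal{C}(A)=\mathcal{C}(B)$) for all $A,B\subseteq\mathcal{L}$. A set $A\subseteq\mathcal{L}$ is inconsistent iff $\mathcal{C}(A)=\mathcal{L}$, consistent otherwise. *)

(* Subsets of a language L are represented as predicates L -> Prop;
   equality of subsets is Leibniz equality of predicates (propext/funext available). *)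
Definition subset {L : Type} (A B : L -> Prop) : Prop := forall x, A x -> B x.

Definition full {L : Type} : L -> Prop := fun _ => True.

Definition is_C_logic {L : Type} (C : (L -> Prop) -> (L -> Prop)) : Prop :=
  (forall A, subset A (C A)) /\
  (forall A B, subset A B -> subset B (C A) -> C A = C B).

Definition inconsistent {L : Type} (C : (L -> Prop) -> (L -> Prop)) (A : L -> Prop) : Prop :=
  C A = full.


Lemma subset_full {L : Type} (A : L -> Prop) : subset A full.
Proof. intros x _. exact I. Qed.

(* Cumulativity applies because [B] lies in [C A], which is everything. *)
Lemma inconsistent_superset {L : Type} (C : (L -> Prop) -> (L -> Prop))
  (HC : is_C_logic C) (A B : L -> Prop) :
  subset A B -> inconsistent C A -> inconsistent C B.
Proof.
  intros HAB HA.
  destruct HC as [_ Hcum].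
  unfold inconsistent in *.
  rewrite <- (Hcum A B HAB); [exact HA |].
  rewrite HA. apply subset_full.
Qed.

Theorem lemma4 (L : Type) (HL : exists x : L, True)
  (C : (L -> Prop) -> (L -> Prop)) (HC : is_C_logic C)
  (A B : L -> Prop) (HAB : subset A B) (HA : inconsistent C A) :
  inconsistent C B.
Proof. exact (inconsistent_superset C HC A B HAB HA). Qed.
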